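(* Let $\delta>0$, $m>64\pi^2$, $\kappa>0$, $\mu^\star>0$, and let $\varepsilon\in(0,1)$, $\ell>0$, $\gamma>0$ satisfy: $\ell\ge\delta$; $-2^5\xi^2+(\mu^\star\varepsilon+6\ell)\xi-(\gamma+1)\ell\le0$ for all $\xi\in\mathbb{R}$; $2\gamma^2-3\ell\ge0$; $e^\varepsilon<\frac{1+2\kappa}{1+\kappa}$; $e^{(\gamma+1)\varepsilon}(1+3\varepsilon^3)<\frac{m}{64\pi^2}$; and $e^{(\ell-\delta)t}(1+(\varepsilon-\ell t)^3)\ge1+\varepsilon^3$ for all $t\in(0,\varepsilon/\ell)$. Put $\tau(t)=\varepsilon-\ell t$, $a(t)=2^5e^{(\gamma+1)\tau}$, $b(t)=8e^{\tau}$ and $$\underline U(s,t):=\frac{a(s^{3/2}+3\tau^3s)}{(s^{1/2}+\tau^3)^3},\qquad \underline W(s,t):=\frac{bs}{s^{1/2}+\tau^3},\qquad(s,t)\in[0,1]\times[0,\varepsilon/\ell).$$ Then for each $t\in[0,\varepsilon/\ell)$ the map $s\mapsto\underline W(s,t)$ on $[0,1]$ is nonnegative, increasing and concave; $\underline W(0,t)=0$ for all $t\in[0,\varepsilon/\ell)$; $$\sup_{t\in(0,\varepsilon/\ell)}\underline W(1,t)<8\cdot\frac{1+2\kappa}{1+\kappa};$$ and $\mathcal Q(\underline U,\underline W)\le0$ for all $(s,t)\in(0,1)\times(0,\varepsilon/\ell)$.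
   Context: For functions $\phi,\psi$ the operator $\mathcal Q$ is $\mathcal Q(\phi,\psi):=\psi_t-16s^{3/2}\psi_{ss}+\delta\psi-\phi$. *)

From Stdlib Require Import Reals Lra.
From Coquelicot Require Import Coquelicot.
Open Scope R_scope.

Definition tau (eps l t : R) : R := eps - l * t.
Definition a_fun (eps l gam t : R) : R := 2 ^ 5 * exp ((gam + 1) * tau eps l t).
Definition b_fun (eps l t : R) : R := 8 * exp (tau eps l t).

Definition Ulow (eps l gam s t : R) : R :=
  a_fun eps l gam t * (s * sqrt s + 3 * (tau eps l t) ^ 3 * s)
  / (sqrt s + (tau eps l t) ^ 3) ^ 3.

Definition Wlow (eps l s t : R) : R :=
  b_fun eps l t * s / (sqrt s + (tau eps l t) ^ 3).

Definition Qop (delta : R) (phi psi : R -> R -> R) (s t : R) : R :=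
  Derive (fun t' => psi s t') t
  - 16 * (s * sqrt s) * Derive (fun s1 => Derive (fun s2 => psi s2 t) s1) s
  + delta * psi s t - phi s t.

(* Write c = tau^3 and x = sqrt s.  Then Wlow = b x^2 / (x + c) with b = 8 e^tau,
   which is increasing in s and lies below each of its tangent lines, hence is
   concave; at s = 1 it is at most b <= 8 e^eps.  For the operator, a direct
   computation gives
     Q(Ulow, Wlow) = 8 e^tau s / (x + c)^3
        * [(delta - l)(x + c)^2 + 3 l tau^2 (x + c) - 4 (e^(gam tau) - 1)(x + 3c)],
   and the bracket is nonpositive since delta <= l, 3 l <= 2 gam^2 and
   e^(gam tau) - 1 >= gam tau + gam^2 tau^2 / 2. *)

From Stdlib Require Import Reals Lra.
From Coquelicot Require Import Coquelicot.
Open Scope R_scope.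

Lemma exp_ge_taylor2 (y : R) : 0 <= y -> 1 + y + y ^ 2 / 2 <= exp y.
Proof.
  intros Hy.
  destruct (MVT_cor4 (fun z => exp z - 1 - z - z ^ 2 / 2) (fun z => exp z - 1 - z) 0 y)
    with (b := y) as [c [Hc _]].
  - intros c _. auto_derive; auto. field.
  - rewrite Rminus_0_r, Rabs_pos_eq; lra.
  - rewrite exp_0 in Hc. pose proof (exp_ineq1_le c). nra.
Qed.

Lemma concave_of_below_tangents (I : R -> Prop) (f f' : R -> R) :
  (forall u v, I u -> I v -> f v <= f u + f' u * (v - u)) ->
  forall x y lam, I x -> I y -> 0 <= lam <= 1 -> I (lam * x + (1 - lam) * y) ->
  lam * f x + (1 - lam) * f y <= f (lam * x + (1 - lam) * y).
Proof.
  intros Htan x y lam Hx Hy Hlam Hz.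
  set (z := lam * x + (1 - lam) * y) in *.
  pose proof (Htan z x Hz Hx) as Tx. pose proof (Htan z y Hz Hy) as Ty.
  apply Rmult_le_compat_l with (r := lam) in Tx; [|lra].
  apply Rmult_le_compat_l with (r := 1 - lam) in Ty; [|lra].
  assert (Hz_eq : lam * (f z + f' z * (x - z)) + (1 - lam) * (f z + f' z * (y - z)) = f z)
    by (unfold z; ring).
  lra.
Qed.

Lemma Derive2_of_is_derive_pos (f f1 : R -> R) (x d : R) :
  0 < x -> (forall y, 0 < y -> is_derive f y (f1 y)) -> is_derive f1 x d ->
  Derive (Derive f) x = d.
Proof.
  intros Hx Hf Hf1.
  rewrite (Derive_ext_loc _ f1); [exact (is_derive_unique _ _ _ Hf1)|].
  exists (mkposreal x Hx). intros y Hy.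
  apply is_derive_unique, Hf.
  apply Rabs_def2 in Hy as [_ Hy]. simpl in Hy. unfold minus, plus, opp in Hy; simpl in Hy. lra.
Qed.

Lemma Lub_Rbar_lt_of_ub (E : R -> Prop) (M N : R) :
  (forall w, E w -> w <= M) -> M < N -> Rbar_lt (Lub_Rbar E) N.
Proof.
  intros Hub HMN.
  destruct (Lub_Rbar_correct E) as [_ Hlub].
  specialize (Hlub M Hub).
  destruct (Lub_Rbar E) as [r | |]; simpl in *; lra.
Qed.

Section Profile.

Variables b c : R.

Definition profile (s : R) : R := b * s / (sqrt s + c).
Definition profile_d1 (s : R) : R := b * (sqrt s / 2 + c) / (sqrt s + c) ^ 2.
Definition profile_d2 (s : R) : R :=
  - b * (sqrt s + 3 * c) / (4 * sqrt s * (sqrt s + c) ^ 3).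

Lemma profile_0 : profile 0 = 0.
Proof. unfold profile. rewrite Rmult_0_r. apply Rdiv_0_l. Qed.

Hypotheses (Hb : 0 < b) (Hc : 0 < c).

Lemma profile_ge0 (s : R) : 0 <= s -> 0 <= profile s.
Proof.
  intros Hs. pose proof (sqrt_pos s). unfold profile, Rdiv.
  apply Rmult_le_pos; [nra|]. left. apply Rinv_0_lt_compat. lra.
Qed.

Lemma profile_lt (s1 s2 : R) : 0 <= s1 -> s1 < s2 -> profile s1 < profile s2.
Proof.
  intros H1 H12.
  pose proof (sqrt_pos s1) as Hx1. pose proof (sqrt_lt_1 s1 s2 H1 ltac:(lra) H12) as Hx12.
  unfold profile. rewrite <- (sqrt_sqrt s1), <- (sqrt_sqrt s2) by lra.
  rewrite !sqrt_square by apply sqrt_pos.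
  set (x1 := sqrt s1) in *. set (x2 := sqrt s2) in *.
  apply Rlt_0_minus.
  replace (b * (x2 * x2) / (x2 + c) - b * (x1 * x1) / (x1 + c))
    with (b * (x1 * x2 + c * (x1 + x2)) * (x2 - x1) / ((x1 + c) * (x2 + c)))
    by (field; lra).
  apply Rdiv_lt_0_compat; [|nra].
  apply Rmult_lt_0_compat; [apply Rmult_lt_0_compat|]; nra.
Qed.

Lemma profile_below_tangent (u v : R) : 0 <= u -> 0 <= v ->
  profile v <= profile u + profile_d1 u * (v - u).
Proof.
  intros Hu Hv. unfold profile_d1.
  pose proof (sqrt_pos u) as Hx. pose proof (sqrt_pos v) as Hy.
  unfold profile. rewrite <- (sqrt_sqrt u), <- (sqrt_sqrt v) by lra.
  rewrite !sqrt_square by apply sqrt_pos.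
  set (x := sqrt u) in *. set (y := sqrt v) in *.
  assert (Hgap : b * (x * x) / (x + c) + b * (x / 2 + c) / (x + c) ^ 2 * (y * y - x * x)
                 - b * (y * y) / (y + c)
                 = b * ((y - x) ^ 2 * ((x + 2 * c) * y + x * c)) / (2 * (x + c) ^ 2 * (y + c)))
    by (field; lra).
  enough (0 <= b * ((y - x) ^ 2 * ((x + 2 * c) * y + x * c)) / (2 * (x + c) ^ 2 * (y + c)))
    by lra.
  assert (0 < (x + c) ^ 2) by (apply pow_lt; lra).
  apply Rdiv_le_0_compat; [|nra].
  apply Rmult_le_pos; [lra|]. apply Rmult_le_pos; [apply pow2_ge_0|].
  apply Rplus_le_le_0_compat; apply Rmult_le_pos; lra.
Qed.

Lemma profile_concave (x y lam : R) : 0 <= x -> 0 <= y -> 0 <= lam <= 1 ->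
  lam * profile x + (1 - lam) * profile y <= profile (lam * x + (1 - lam) * y).
Proof.
  intros Hx Hy Hlam.
  apply (concave_of_below_tangents (fun s => 0 <= s) _ profile_d1); try nra.
  exact profile_below_tangent.
Qed.

Lemma profile_1_lt : profile 1 < b.
Proof.
  unfold profile. rewrite sqrt_1, Rmult_1_r.
  apply Rlt_div_l; nra.
Qed.

Lemma is_derive_profile (s : R) : 0 < s -> is_derive profile s (profile_d1 s).
Proof.
  intros Hs. pose proof (sqrt_lt_R0 s Hs). unfold profile, profile_d1.
  auto_derive.
  - repeat split; lra.
  - pose proof (sqrt_sqrt s ltac:(lra)) as Hss.
    set (x := sqrt s) in *. clearbody x. subst s. field. lra.
Qed.

Lemma is_derive_profile_d1 (s : R) : 0 < s -> is_derive profile_d1 s (profile_d2 s).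
Proof.
  intros Hs. pose proof (sqrt_lt_R0 s Hs). unfold profile_d1, profile_d2.
  auto_derive.
  - repeat split; try lra. intro. nra.
  - pose proof (sqrt_sqrt s ltac:(lra)) as Hss.
    set (x := sqrt s) in *. clearbody x. subst s. field. lra.
Qed.

Lemma Derive2_profile (s : R) : 0 < s -> Derive (Derive profile) s = profile_d2 s.
Proof.
  intros Hs. apply (Derive2_of_is_derive_pos _ profile_d1); auto.
  - exact is_derive_profile.
  - now apply is_derive_profile_d1.
Qed.

End Profile.

Lemma Wlow_profile (eps l s t : R) :
  Wlow eps l s t = profile (b_fun eps l t) (tau eps l t ^ 3) s.
Proof. reflexivity. Qed.

Lemma tau_pos (eps l t : R) : 0 < l -> t < eps / l -> 0 < tau eps l t.
Proof.
  intros Hl Ht. unfold tau.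
  apply Rlt_0_minus. rewrite Rmult_comm. now apply Rlt_div_r.
Qed.

Lemma b_fun_pos (eps l t : R) : 0 < b_fun eps l t.
Proof. unfold b_fun. pose proof (exp_pos (tau eps l t)). lra. Qed.

Lemma is_derive_Wlow_t (eps l s t : R) : 0 <= s -> 0 < tau eps l t ->
  is_derive (fun t' : R => Wlow eps l s t') t
    (8 * s * exp (tau eps l t) * l * (3 * tau eps l t ^ 2 - (sqrt s + tau eps l t ^ 3))
       / (sqrt s + tau eps l t ^ 3) ^ 2).
Proof.
  intros Hs Ht. pose proof (sqrt_pos s).
  assert (0 < tau eps l t ^ 3) by (apply pow_lt; lra).
  unfold Wlow, b_fun, tau in *.
  auto_derive; [lra|]. unfold Rminus in *. field. lra.
Qed.

Definition Q_bracket (delta l gam T x : R) : R :=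
  (delta - l) * (x + T ^ 3) ^ 2 + 3 * l * T ^ 2 * (x + T ^ 3)
  - 4 * (exp (gam * T) - 1) * (x + 3 * T ^ 3).

Lemma Q_bracket_nonpos (delta l gam T x : R) :
  delta <= l -> 0 < gam -> 3 * l <= 2 * gam ^ 2 -> 0 < T -> 0 <= x ->
  Q_bracket delta l gam T x <= 0.
Proof.
  intros Hdl Hg Hgl HT Hx. unfold Q_bracket.
  assert (Hc : 0 < T ^ 3) by (apply pow_lt; lra). set (c := T ^ 3) in *.
  pose proof (exp_ge_taylor2 (gam * T) ltac:(nra)) as Htaylor.
  assert (0 <= (l - delta) * (x + c) ^ 2) by (apply Rmult_le_pos; [lra|apply pow2_ge_0]).
  assert (0 <= (2 * gam ^ 2 - 3 * l) * (T ^ 2 * (x + c))).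
  { apply Rmult_le_pos; [lra|]. apply Rmult_le_pos; [apply pow2_ge_0|lra]. }
  assert (0 <= gam ^ 2 * T ^ 2 * c) by (apply Rmult_le_pos; [|lra]; nra).
  assert (4 * (gam * T + (gam * T) ^ 2 / 2) * (x + 3 * c)
          <= 4 * (exp (gam * T) - 1) * (x + 3 * c)) by (apply Rmult_le_compat_r; lra).
  assert (0 <= gam * T * (x + 3 * c)) by (apply Rmult_le_pos; nra).
  lra.
Qed.

Lemma Qop_Wlow_eq (delta eps l gam s t : R) : 0 < s -> 0 < tau eps l t ->
  Qop delta (Ulow eps l gam) (Wlow eps l) s t
  = 8 * exp (tau eps l t) * s / (sqrt s + tau eps l t ^ 3) ^ 3
    * Q_bracket delta l gam (tau eps l t) (sqrt s).
Proof.
  intros Hs HT.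
  assert (Hc : 0 < tau eps l t ^ 3) by (apply pow_lt; lra).
  pose proof (sqrt_lt_R0 s Hs) as Hx.
  unfold Qop.
  rewrite (is_derive_unique _ _ _ (is_derive_Wlow_t eps l s t ltac:(lra) HT)).
  change (Derive (fun s1 => Derive (fun s2 => Wlow eps l s2 t) s1) s) with
    (Derive (Derive (profile (b_fun eps l t) (tau eps l t ^ 3))) s).
  rewrite Derive2_profile by assumption.
  unfold profile_d2, Ulow, Wlow, a_fun, b_fun, Q_bracket.
  set (T := tau eps l t) in *.
  replace ((gam + 1) * T) with (T + gam * T) by ring.
  rewrite exp_plus.
  pose proof (sqrt_sqrt s ltac:(lra)) as Hss.
  set (x := sqrt s) in *. clearbody x. subst s.
  field. lra.
Qed.

Lemma Qop_Wlow_nonpos (delta eps l gam s t : R) :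
  delta <= l -> 0 < gam -> 3 * l <= 2 * gam ^ 2 -> 0 < s -> 0 < tau eps l t ->
  Qop delta (Ulow eps l gam) (Wlow eps l) s t <= 0.
Proof.
  intros Hdl Hg Hgl Hs HT.
  rewrite (Qop_Wlow_eq delta eps l gam s t Hs HT).
  apply Rmult_le_0_l; [|apply Q_bracket_nonpos; auto using sqrt_pos].
  pose proof (sqrt_pos s). pose proof (exp_pos (tau eps l t)).
  assert (0 < tau eps l t ^ 3) by (apply pow_lt; lra).
  apply Rdiv_le_0_compat; [nra|]. apply pow_lt. lra.
Qed.

Lemma Wlow_1_le (eps l t : R) : 0 < l -> 0 <= t < eps / l ->
  Wlow eps l 1 t <= 8 * exp eps.
Proof.
  intros Hl Ht. pose proof (tau_pos eps l t Hl (proj2 Ht)) as HT.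
  rewrite Wlow_profile. apply Rlt_le, Rlt_le_trans with (b_fun eps l t).
  - apply profile_1_lt; [apply b_fun_pos|apply pow_lt, HT].
  - unfold b_fun, tau. apply Rmult_le_compat_l; [lra|].
    destruct (Rle_lt_or_eq_dec 0 t (proj1 Ht)) as [Ht0 | <-].
    + left. apply exp_increasing. nra.
    + right. f_equal. ring.
Qed.

Theorem lemma3p6 (delta m kappa mu eps l gam : R) :
  0 < delta -> 64 * PI ^ 2 < m -> 0 < kappa -> 0 < mu ->
  0 < eps < 1 -> 0 < l -> 0 < gam ->
  delta <= l ->
  (forall xi : R, - 2 ^ 5 * xi ^ 2 + (mu * eps + 6 * l) * xi - (gam + 1) * l <= 0) ->
  2 * gam ^ 2 - 3 * l >= 0 ->
  exp eps < (1 + 2 * kappa) / (1 + kappa) ->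
  exp ((gam + 1) * eps) * (1 + 3 * eps ^ 3) < m / (64 * PI ^ 2) ->
  (forall t : R, 0 < t < eps / l ->
     exp ((l - delta) * t) * (1 + (eps - l * t) ^ 3) >= 1 + eps ^ 3) ->
  (forall t : R, 0 <= t < eps / l ->
     (forall s, 0 <= s <= 1 -> 0 <= Wlow eps l s t)
     /\ (forall s1 s2, 0 <= s1 -> s1 < s2 -> s2 <= 1 -> Wlow eps l s1 t < Wlow eps l s2 t)
     /\ (forall x y lam, 0 <= x <= 1 -> 0 <= y <= 1 -> 0 <= lam <= 1 ->
           lam * Wlow eps l x t + (1 - lam) * Wlow eps l y t
           <= Wlow eps l (lam * x + (1 - lam) * y) t))
  /\ (forall t : R, 0 <= t < eps / l -> Wlow eps l 0 t = 0)
  /\ Rbar_lt (Lub_Rbar (fun w => exists t, 0 < t < eps / l /\ w = Wlow eps l 1 t))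
             (Finite (8 * ((1 + 2 * kappa) / (1 + kappa))))
  /\ (forall s t : R, 0 < s < 1 -> 0 < t < eps / l ->
        Qop delta (Ulow eps l gam) (Wlow eps l) s t <= 0).
Proof.
  intros _ _ _ _ He Hl Hg Hdl _ Hgl Hexp _ _.
  split; [|split; [|split]].
  - intros t Ht.
    pose proof (b_fun_pos eps l t) as Hb.
    assert (Hc : 0 < tau eps l t ^ 3) by (apply pow_lt, tau_pos; lra).
    split; [|split].
    + intros s Hs. now apply profile_ge0.
    + intros s1 s2 H1 H12 _. now apply profile_lt.
    + intros x y lam Hx Hy Hlam. apply profile_concave; lra.
  - intros t _. apply profile_0.
  - apply (Lub_Rbar_lt_of_ub _ (8 * exp eps)); [|lra].
    intros w [t [Ht ->]]. apply Wlow_1_le; lra.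
  - intros s t Hs Ht. apply Qop_Wlow_nonpos; try lra. apply tau_pos; lra.
Qed.
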